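(* Let $K$ be a finite field of characteristic $p$, let $L$ be a finite extension of $K$ such that $[L:K]$ is a power of a prime $\ell\neq p$, and let $d$ be an integer with $\gcd(d,|L|-1)=1$. Let $1/d$ denote an integer that is a multiplicative inverse of $d$ modulo $p-1$, and regard $[L:K]$ as a (nonzero) element of $\mathbb{F}_p\subseteq K$. Then for every $a\in K$, $$W_{L,d}(a)\equiv W_{K,d}\big([L:K]^{1-1/d}a\big)\pmod{\ell},$$ where the congruence means that the difference is $\ell$ times an algebraic integer.
   Context: For a finite field $F$ of characteristic $p$, $\psi_F(x)=\exp(2\pi i\,\mathrm{Tr}_{F/\mathbb{F}_p}(x)/p)$; for a field $F$ with $\gcd(d,|F|-1)=1$ and $a\in F$, $W_{F,d}(a)=\sum_{x\in F}\psi_F(x^d+ax)$. *)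

From HB Require Import structures.
From mathcomp Require Import all_boot all_order all_algebra all_field.
Set Implicit Arguments. Unset Strict Implicit. Unset Printing Implicit Defensive.
Import Order.TTheory GRing.Theory Num.Theory.
Local Open Scope ring_scope.

(* complex numbers are the algebraic numbers algC. *)

Definition fchar (F : finFieldType) : nat := pdiv #|F|.

(* Absolute trace Tr_{F/F_p}(x) = sum_{i < m} x^(p^i), where #|F| = p^m. *)
Definition abs_trace (F : finFieldType) (x : F) : F :=
  \sum_(i < logn (fchar F) #|F|) x ^+ (fchar F ^ i).

(* The trace, which lies in the prime field F_p, as an integer in [0, p). *)
Definition abs_trace_nat (F : finFieldType) (x : F) : nat :=
  odflt 0%N (omap (@nat_of_ord _)
    [pick k : 'I_(fchar F) | (k%:R : F) == abs_trace x]).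

(* exp(2 pi i / p): n.-root (-1) is the n-th root of -1 of minimal
   nonnegative argument, i.e. exp(i pi / n). *)
Definition zeta (p : nat) : algC := (p.-root (-1)) ^+ 2.

Definition psi (F : finFieldType) (x : F) : algC :=
  zeta (fchar F) ^+ abs_trace_nat x.

Definition W (F : finFieldType) (d : int) (a : F) : algC :=
  \sum_(x : F) psi (x ^ d + a * x).

(* Degree [L:K] of a finite field extension iota : K -> L; since L is a
   K-vector space of dimension n, #|L| = #|K|^n. *)
Definition ext_degree (K L : finFieldType) (iota : {rmorphism K -> L}) : nat :=
  trunc_log #|K| #|L|.

From HB Require Import structures.
From mathcomp Require Import all_boot all_order all_algebra all_field.
From mathcomp Require Import all_fingroup all_solvable.
From mathcomp Require Import ring.
Import Order.TTheory GRing.Theory Num.Theory.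
Set Implicit Arguments. Unset Strict Implicit. Unset Printing Implicit Defensive.
Local Open Scope ring_scope.

(* Let q = |K| and f(x) = x^d + a x on L.  The Frobenius power x |-> x^q
   fixes exactly the image of K, has order [L:K], a power of l, and commutes
   with f while preserving the absolute trace.  Hence the terms psi(f(x)) of
   W_{L,d}(a) with x outside K are constant on Frobenius-stable level sets
   without fixed points, whose sizes are multiples of l by the p-group fixed
   point lemma.  The terms with x in K form W_{K,d}([L:K]^(1-1/d) a), since
   Tr_{L/F_p}(y) = [L:K] Tr_{K/F_p}(y) on K and y |-> [L:K]^(-1/d) y turns
   [L:K](y^d + a y) into y^d + [L:K]^(1-1/d) a y. *)

Section PermutationPowerCycle.

Variables (T : finType) (f : T -> T) (l n : nat).
Hypotheses (l_nat_n : l.-nat n) (f_cycle : iter n f =1 id).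

Lemma dvdn_card_nonfixed (A : {set T}) :
  (forall x, (f x \in A) = (x \in A)) -> (l %| #|[set x in A | f x != x]|)%N.
Proof.
move=> fA.
have n_gt0 : (0 < n)%N by case/andP: l_nat_n.
have f_inj : injective f.
  by apply: (can_inj (g := iter n.-1 f)) => x; rewrite -iterSr prednK.
pose phi := perm f_inj.
have phiE x : phi x = f x by rewrite permE.
have l_group : (l.-group <[phi]>)%g.
  apply: pnat_dvd l_nat_n; rewrite order_dvdn; apply/eqP/permP => x.
  by rewrite permX perm1 (eq_iter phiE) f_cycle.
have phi_acts : ([acts <[phi]>, on A | 'P])%g.
  by rewrite cycle_subG; apply/astabsP => x; rewrite /= apermE phiE fA.
have nonfixedE : A :\: ('Fix_('P)(<[phi]>))%g = [set x in A | f x != x].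
  apply/setP => x; rewrite in_setD afix_cycle inE andbC; congr (_ && ~~ _).
  by apply/afix1P/eqP; rewrite /= apermE phiE.
have := pgroup_fix_mod l_group phi_acts.
rewrite -(cardsID ('Fix_('P)(<[phi]>))%g A) nonfixedE => /eqP.
by rewrite -{2}[#|_ :&: _|]addn0 eqn_modDl mod0n.
Qed.

Lemma sum_nonfixed_Aint (U : finType) (g : T -> U) (w : U -> algC) :
  (forall x, g (f x) = g x) -> (forall u, w u \in Aint) ->
  exists z, z \in Aint /\ \sum_(x | f x != x) w (g x) = l%:R * z.
Proof.
move=> g_inv w_Aint.
pose S u := [set x in [set y | g y == u] | f x != x].
have l_dvd u : (l %| #|S u|)%N.
  by apply: dvdn_card_nonfixed => x; rewrite !inE g_inv.
exists (\sum_u (#|S u| %/ l)%:R * w u); split.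
  by apply: rpred_sum => u _; rewrite rpredM ?rpred_nat.
rewrite (partition_big g xpredT) //= mulr_sumr; apply: eq_bigr => u _.
rewrite mulrA -natrM mulnC divnK // -sum1_card natr_sum mulr_suml.
by apply: eq_big => [x|x /andP[_ /eqP <-]]; rewrite ?mul1r // !inE andbC.
Qed.

End PermutationPowerCycle.

Lemma iter_exprn (R : pzSemiRingType) (k n : nat) (x : R) :
  iter n (fun y => y ^+ k) x = x ^+ (k ^ n).
Proof.
by elim: n => [|n IHn]; rewrite ?expr1 //= IHn -exprM -expnSr.
Qed.

Lemma expr_expn_fixed (R : pzSemiRingType) (x : R) (q k : nat) :
  x ^+ q = x -> x ^+ (q ^ k) = x.
Proof.
by move=> xq; elim: k => [|k IHk]; rewrite ?expr1 // expnSr exprM IHk.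
Qed.

Lemma sum_expr_expn_mul (R : pzSemiRingType) (z : R) (q m n : nat) :
  z ^+ (q ^ m) = z -> \sum_(i < m * n) z ^+ (q ^ i) = n%:R * \sum_(i < m) z ^+ (q ^ i).
Proof.
move=> zm; elim: n => [|n IHn]; first by rewrite muln0 big_ord0 mul0r.
rewrite mulnS addnC big_split_ord /= IHn mulrSr mulrDl mul1r; congr (_ + _).
by apply: eq_bigr => i _; rewrite expnD exprM expnM (expr_expn_fixed _ zm).
Qed.

Lemma expr_expn_gcdn_fixed (R : pzSemiRingType) (x : R) (q a b : nat) :
  (0 < a)%N -> x ^+ (q ^ a) = x -> x ^+ (q ^ b) = x -> x ^+ (q ^ gcdn a b) = x.
Proof.
move=> a_gt0 xa xb; have [u v Euv _] := egcdnP b a_gt0.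
have xua : x ^+ (q ^ (u * a)) = x by rewrite mulnC expnM expr_expn_fixed.
have xvb : x ^+ (q ^ (v * b)) = x by rewrite mulnC expnM expr_expn_fixed.
by rewrite -{2}xua Euv expnD exprM xvb.
Qed.

Lemma card_expr_fixed_le (F : finFieldType) (k : nat) :
  (1 < k)%N -> (#|[set x : F | x ^+ k == x]| <= k)%N.
Proof.
move=> k_gt1.
have size_XkX : size ('X^k - 'X : {poly F}) = k.+1.
  by rewrite size_polyDl ?size_polyXn // size_polyN size_polyX ltnS.
have XkX_neq0 : 'X^k - 'X != 0 :> {poly F} by rewrite -size_poly_eq0 size_XkX.
rewrite -ltnS -size_XkX cardE; apply: max_poly_roots XkX_neq0 _ (enum_uniq _).
by apply/allP => x; rewrite mem_enum inE rootE !hornerE => /eqP->; rewrite subrr.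
Qed.

Lemma sum_scale_binomial (F : finFieldType) (V : nmodType) (G : F -> V)
    (r : nat) (d e : int) (c a : F) :
  c != 0 -> c ^+ r.+1 = c -> (d * e == 1 %[mod r%:Z])%Z ->
  \sum_(y : F) G (c * (y ^ d + a * y)) = \sum_(y : F) G (y ^ d + c ^ (1 - e) * a * y).
Proof.
move=> c_neq0 cr de.
have cr1 : c ^+ r = 1 by apply: (mulfI c_neq0); rewrite mulr1 -exprS.
have [t Et] : exists t, d * e - 1 = t * r%:Z by apply/dvdzP; rewrite -eqz_mod_dvd.
set b := c ^ (- e).
have b_neq0 : b != 0 by rewrite expfz_neq0.
have cbd : c * b ^ d = 1.
  rewrite exprz_exp -[X in X * _]expr1z -expfzDr //.
  have -> : 1 + - e * d = r%:Z * - t by rewrite mulrN (mulrC _ t) -Et; ring.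
  by rewrite -exprz_exp -exprnP cr1 exp1rz.
have cb : c * b = c ^ (1 - e) by rewrite -[X in X * _]expr1z -expfzDr.
rewrite (reindex_inj (mulfI b_neq0)) /=; apply: eq_bigr => y _.
by rewrite expfzMl mulrDr [c * (b ^ d * _)]mulrA cbd mul1r -cb; congr (G (_ + _)); ring.
Qed.

Section AbsoluteTrace.

Variables (F : finFieldType) (p : nat).
Hypothesis pF : p \in [pchar F].

Lemma logn_card_gt0 : (0 < logn p #|F|)%N.
Proof.
rewrite lt0n; apply: contraTneq (finNzRing_gt1 F) => m0.
by rewrite (card_pprimeChar pF) m0.
Qed.

Lemma fchar_pchar : fchar F = p.
Proof.
rewrite /fchar (card_pprimeChar pF) -(prednK logn_card_gt0).
by rewrite pdiv_pfactor // (pcharf_prime pF).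
Qed.

Lemma abs_trace_expr_pchar (x : F) : abs_trace (x ^+ p) = abs_trace x.
Proof.
rewrite /abs_trace fchar_pchar -(prednK logn_card_gt0).
rewrite big_ord_recr big_ord_recl /= addrC; congr (_ + _).
  by rewrite -exprM -expnS prednK ?logn_card_gt0 // -(card_pprimeChar pF) expf_card.
by apply: eq_bigr => i _; rewrite -exprM -expnS.
Qed.

Lemma abs_trace_expr_expn (x : F) (j : nat) : abs_trace (x ^+ (p ^ j)) = abs_trace x.
Proof.
by elim: j => [|j IHj]; rewrite ?expr1 // expnSr exprM abs_trace_expr_pchar.
Qed.

End AbsoluteTrace.

Lemma abs_trace_nat_lt (F : finFieldType) (x : F) : (abs_trace_nat x < fchar F)%N.
Proof. by rewrite /abs_trace_nat; case: pickP => [k _|_] /=; rewrite ?pdiv_gt0. Qed.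

Definition abs_trace_ord (F : finFieldType) (x : F) : 'I_(fchar F) :=
  Ordinal (abs_trace_nat_lt x).

Lemma eq_abs_trace_ord (F : finFieldType) (x y : F) :
  abs_trace x = abs_trace y -> abs_trace_ord x = abs_trace_ord y.
Proof. by move=> xy; apply: val_inj; rewrite /= /abs_trace_nat xy. Qed.

Lemma zeta_Aint (p : nat) : (0 < p)%N -> zeta p \in Aint.
Proof.
move=> p_gt0; apply: (Aint_unity_root p_gt0); rewrite unity_rootE /zeta.
by rewrite -exprM mulnC exprM rootCK // sqrrN expr1n.
Qed.

Section FiniteFieldExtension.

Variables (K L : finFieldType) (iota : {rmorphism K -> L}) (p : nat).
Hypothesis pK : p \in [pchar K].

Let pL : p \in [pchar L] := etrans (fmorph_pchar iota p) pK.
Let p_gt1 : (1 < p)%N := prime_gt1 (pcharf_prime pK).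

Lemma logn_card_dvd : (logn p #|K| %| logn p #|L|)%N.
Proof.
set m := logn p #|K|; set M := logn p #|L|; set g := gcdn m M.
have m_gt0 : (0 < m)%N := logn_card_gt0 pK.
have fixed_g (y : K) : y ^+ (p ^ g) = y.
  apply: expr_expn_gcdn_fixed m_gt0 _ _; first by rewrite -(card_pprimeChar pK) expf_card.
  by apply: (fmorph_inj iota); rewrite rmorphXn -(card_pprimeChar pL) expf_card.
have : (p ^ m <= p ^ g)%N.
  rewrite -(card_pprimeChar pK) -cardsT.
  have -> : [set: K] = [set y | y ^+ (p ^ g) == y].
    by apply/setP => y; rewrite !inE fixed_g eqxx.
  by apply: card_expr_fixed_le; rewrite -[1%N](expn0 p) ltn_exp2l // gcdn_gt0 m_gt0.
rewrite leq_exp2l // => le_m_g; apply/gcdn_idPl/eqP.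
by rewrite eqn_leq le_m_g dvdn_leq ?dvdn_gcdl.
Qed.

Lemma card_ext_degree : #|L| = (#|K| ^ ext_degree iota)%N.
Proof.
have [s Es] := dvdnP logn_card_dvd.
rewrite /ext_degree (card_pprimeChar pL) Es mulnC expnM -(card_pprimeChar pK).
by rewrite trunc_expnK ?finNzRing_gt1.
Qed.

Lemma fmorph_fixedE (x : L) : (x ^+ #|K| == x) = (x \in [set iota y | y : K]).
Proof.
apply/idP/idP => [x_fixed|/imsetP[y _ ->]]; last by rewrite -rmorphXn expf_card.
apply/negPn/negP => x_notin.
have sub : x |: [set iota y | y : K] \subset [set z : L | z ^+ #|K| == z].
  apply/subsetP => z; rewrite !inE => /predU1P[->|/imsetP[y _ ->]] //.
  by rewrite -rmorphXn expf_card.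
have := subset_leq_card sub.
rewrite cardsU1 x_notin card_imset; last exact: fmorph_inj.
by rewrite ltnNge card_expr_fixed_le ?finNzRing_gt1.
Qed.

Lemma abs_trace_fmorph (z : K) :
  abs_trace (iota z) = iota (abs_trace ((ext_degree iota)%:R * z)).
Proof.
set n := ext_degree iota; set m := logn p #|K|.
have logn_cardL : logn p #|L| = (m * n)%N.
  by rewrite card_ext_degree {1}(card_pprimeChar pK) -expnM pfactorK ?(pcharf_prime pK).
have n_fixed j : (n%:R : K) ^+ (p ^ j) = n%:R.
  by apply: expr_expn_fixed; rewrite -(pFrobenius_autE pK) pFrobenius_aut_nat.
rewrite /abs_trace (fchar_pchar pK) (fchar_pchar pL) logn_cardL -/m.
under eq_bigr do rewrite -rmorphXn.
rewrite -rmorph_sum sum_expr_expn_mul; last by rewrite -(card_pprimeChar pK) expf_card.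
by rewrite mulr_sumr; congr (iota _); apply: eq_bigr => i _; rewrite exprMn n_fixed.
Qed.

Lemma psi_fmorph (z : K) : psi (iota z) = psi ((ext_degree iota)%:R * z).
Proof.
rewrite /psi /abs_trace_nat abs_trace_fmorph (fchar_pchar pK) (fchar_pchar pL).
congr (_ ^+ odflt _ (omap _ _)); apply: eq_pick => k /=.
by rewrite -(rmorph_nat iota) (inj_eq (fmorph_inj iota)).
Qed.

Lemma expr_card_binomial (a : K) (d : int) (x : L) :
  (x ^ d + iota a * x) ^+ #|K| = (x ^+ #|K|) ^ d + iota a * x ^+ #|K|.
Proof.
rewrite exprDn_pchar; last first.
  by rewrite (card_pprimeChar pK) pnatX (pnatE _ (pcharf_prime pK)) pL.
by rewrite exprMn -rmorphXn expf_card (exprzAC x #|K| d).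
Qed.

Lemma sum_fixed_psi_W (a : K) (d e : int) :
  (ext_degree iota)%:R != 0 :> K -> (d * e == 1 %[mod (p.-1)%:Z])%Z ->
  \sum_(x | x ^+ #|K| == x) psi (x ^ d + iota a * x)
    = W d ((ext_degree iota)%:R ^ (1 - e) * a).
Proof.
move=> n_neq0 de; set n := ext_degree iota.
have n_fixed : (n%:R : K) ^+ (p.-1).+1 = n%:R.
  by rewrite prednK 1?ltnW // -(pFrobenius_autE pK) pFrobenius_aut_nat.
rewrite /W -(sum_scale_binomial _ a n_neq0 n_fixed de) (eq_bigl _ _ fmorph_fixedE).
rewrite big_imset /=; last by move=> y z _ _; apply: fmorph_inj.
by apply: eq_bigr => y _; rewrite -psi_fmorph rmorphD rmorphM fmorphXz.
Qed.

End FiniteFieldExtension.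

Theorem lemma3p3 (K L : finFieldType) (iota : {rmorphism K -> L})
    (p l : nat) (d e : int) :
  p \in [pchar K] ->
  prime l -> l != p ->
  (exists k : nat, ext_degree iota = (l ^ k)%N) ->
  coprimez d (#|L|.-1)%:Z ->
  (d * e == 1 %[mod (p.-1)%:Z])%Z ->
  forall a : K,
    exists z : algC, z \in Aint /\
      W d (iota a) - W d ((ext_degree iota)%:R ^ (1 - e) * a) = l%:R * z.
Proof.
move=> pK l_prime l_neq_p [k degE] _ de a.
have pL : p \in [pchar L] by rewrite (fmorph_pchar iota).
set n := ext_degree iota in degE *.
pose f (x : L) := x ^ d + iota a * x.
pose frob (x : L) := x ^+ #|K|.
have frob_cycle : iter n frob =1 id.
  by move=> x; rewrite iter_exprn -(card_ext_degree iota pK) expf_card.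
have frob_trace x : abs_trace_ord (f (frob x)) = abs_trace_ord (f x).
  apply: eq_abs_trace_ord; rewrite /f /frob -(expr_card_binomial _ pK).
  by rewrite (card_pprimeChar pK) (abs_trace_expr_expn pL).
have l_nat_n : l.-nat n by rewrite degE pnatX pnat_id.
have [z [z_Aint sum_z]] := sum_nonfixed_Aint l_nat_n frob_cycle frob_trace
  (fun j => rpredX j (zeta_Aint (pdiv_gt0 #|L|))).
have n_neq0 : (n%:R : K) != 0.
  rewrite -(dvdn_pcharf pK) degE Euclid_dvdX ?(pcharf_prime pK) //.
  by rewrite dvdn_prime2 ?(pcharf_prime pK) // eq_sym (negPf l_neq_p).
(* [sum_z] sums [zeta (fchar L) ^+ abs_trace_ord (f x)], which is [psi (f x)]. *)
exists z; split=> //; rewrite -sum_z -(sum_fixed_psi_W pK a n_neq0 de).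
by rewrite /W (bigID (fun x => frob x == x)) /= addrC addrK.
Qed.
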